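(* Let $n\geq2$ and $\mathrm{Ch}_{3,n}(x)=x_1^3-3x_1(x_2^2+\dots+x_n^2)$. Then \[ \frac{1}{3n-2}\mathrm{Ch}_{3,n}(x)=\frac{n+2}{9n-6}x_1^3+\frac{4}{9n-6}\sum_{i=2}^n\left[-\Big(\frac{x_1+\sqrt3x_i}{2}\Big)^3+\Big(\frac{-x_1+\sqrt3x_i}{2}\Big)^3\right]. \] In particular, the symmetric tensor associated with $\mathrm{Ch}_{3,n}$ is critical in $\mathrm{Sym}^3(\mathbb{R}^n)$.
   Context: Tensors and norms: \begin{itemize} \item The symmetric tensor $A$ associated with a form $p\in P_{d,n}$ satisfies $p(x)=\langle A,x\otimes\cdots\otimes x\rangle_F$, where $\langle\cdot,\cdot\rangle_F$ is the Frobenius inner product. \item The spectral norm is $\|A\|_2=\max_{\|x^{(j)}\|=1}\langle A,x^{(1)}\otimes\cdots\otimes x^{(d)}\rangle_F$. \end{itemize} Generalized gradient (Clarke): for a Lipschitz function $f$ on a Euclidean space, $\partial f(p)$ is the convex hull of all limits of $\nabla f(p_i)$, taken over sequences $p_i\to p$ of differentiability points. A nonzero $A\in\mathrm{Sym}^d(\mathbb{R}^n)$ is critical in $\mathrm{Sym}^d(\mathbb{R}^n)$ if $\lambda A\in\partial g(A/\|A\|_F)$ for some $\lambda\in\mathbb{R}$, where $g$ is the spectral norm as a function on the Euclidean space $(\mathrm{Sym}^d(\mathbb{R}^n),\langle\cdot,\cdot\rangle_F)$. *)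

From Stdlib Require Import Reals Lra ClassicalEpsilon.
Open Scope R_scope.

(* Vectors in R^n: x : nat -> R, meaningful on indices 0..n-1 (x 0 is x_1).
   3-tensors on R^n: A : nat -> nat -> nat -> R, meaningful on indices < n. *)
Definition vec := nat -> R.
Definition tensor := nat -> nat -> nat -> R.

Fixpoint rsum (n : nat) (f : nat -> R) : R :=
  match n with O => 0 | S m => rsum m f + f m end.

Definition tadd (A B : tensor) : tensor := fun i j k => A i j k + B i j k.
Definition tsub (A B : tensor) : tensor := fun i j k => A i j k - B i j k.
Definition tscale (c : R) (A : tensor) : tensor := fun i j k => c * A i j k.
Definition outer3 (x y z : vec) : tensor := fun i j k => x i * y j * z k.

Definition teq (n : nat) (A B : tensor) : Prop :=
  forall i j k, (i < n)%nat -> (j < n)%nat -> (k < n)%nat -> A i j k = B i j k.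

Definition tsym (n : nat) (A : tensor) : Prop :=
  forall i j k, (i < n)%nat -> (j < n)%nat -> (k < n)%nat ->
    A i j k = A j i k /\ A i j k = A i k j.

Definition frob (n : nat) (A B : tensor) : R :=
  rsum n (fun i => rsum n (fun j => rsum n (fun k => A i j k * B i j k))).
Definition fnorm (n : nat) (A : tensor) : R := sqrt (frob n A A).

Definition vnorm2 (n : nat) (x : vec) : R := rsum n (fun i => x i * x i).

Definition spec_vals (n : nat) (A : tensor) (v : R) : Prop :=
  exists x y z : vec, vnorm2 n x = 1 /\ vnorm2 n y = 1 /\ vnorm2 n z = 1 /\
    v = frob n A (outer3 x y z).
Definition specnorm (n : nat) (A : tensor) : R :=
  epsilon (inhabits 0) (is_lub (spec_vals n A)).

Definition has_grad (n : nat) (f : tensor -> R) (p G : tensor) : Prop :=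
  tsym n G /\
  forall eps, 0 < eps -> exists delta, 0 < delta /\
    forall h, tsym n h -> fnorm n h < delta ->
      Rabs (f (tadd p h) - f p - frob n G h) <= eps * fnorm n h.

Definition tconv (n : nat) (s : nat -> tensor) (L : tensor) : Prop :=
  forall eps, 0 < eps -> exists N, forall k, (N <= k)%nat -> fnorm n (tsub (s k) L) < eps.

Definition clarke_limits (n : nat) (f : tensor -> R) (p G : tensor) : Prop :=
  exists ps Gs : nat -> tensor,
    (forall k, tsym n (ps k)) /\ (forall k, has_grad n f (ps k) (Gs k)) /\
    tconv n ps p /\ tconv n Gs G.

Definition conv_hull (n : nat) (S : tensor -> Prop) (X : tensor) : Prop :=
  exists (m : nat) (lam : nat -> R) (pts : nat -> tensor),
    (forall i, (i < m)%nat -> 0 <= lam i /\ S (pts i)) /\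
    rsum m lam = 1 /\
    teq n X (fun a b c => rsum m (fun i => lam i * pts i a b c)).

Definition clarke_grad (n : nat) (f : tensor -> R) (p X : tensor) : Prop :=
  conv_hull n (clarke_limits n f p) X.

Definition critical (n : nat) (A : tensor) : Prop :=
  tsym n A /\ fnorm n A <> 0 /\
  exists lam : R, clarke_grad n (specnorm n) (tscale (/ fnorm n A) A) (tscale lam A).

Definition Ch3 (n : nat) (x : vec) : R :=
  x 0%nat ^ 3 - 3 * x 0%nat * rsum (n - 1) (fun i => x (S i) ^ 2).

From Stdlib Require Import Reals Lra Lia Psatz ClassicalEpsilon FunctionalExtensionality.
Open Scope R_scope.

(* Ch_{3,n}/(3n-2) = sum_j mu_j <v_j, x>^3 with weights mu_j >= 0 summing to 1 and unit vectors
   v_j = e_1, (-e_1 -+ sqrt 3 e_i)/2; expanded, this is the stated identity.  The associated trilinear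
   form is at most 1 on unit triples and equals Ch_{3,n}(v_j) = 1 at (v_j, v_j, v_j), so each v_j
   maximizes it.  If v maximizes the trilinear form of p, then at (1-t) p + t v⊗v⊗v the spectral norm
   is squeezed between an affine function with slope v⊗v⊗v and the same plus |h|^2/(2t), hence is
   differentiable there with gradient v⊗v⊗v; letting t -> 0 makes v⊗v⊗v a Clarke limit at p.
   A symmetric tensor is determined by its cubic form (polarization), so
   A/(3n-2) = sum_j mu_j v_j⊗v_j⊗v_j, a convex combination of Clarke limits at A/|A|. *)

Lemma rsum_ext_lt k f g : (forall i, (i < k)%nat -> f i = g i) -> rsum k f = rsum k g.
Proof.
  induction k as [|k IH]; intros H; simpl; auto.
  rewrite IH by (intros; apply H; lia). rewrite H by lia. reflexivity.
Qed.

Lemma rsum_ext k f g : (forall i, f i = g i) -> rsum k f = rsum k g.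
Proof. intros H; apply rsum_ext_lt; auto. Qed.

Lemma rsum_add k f g : rsum k (fun i => f i + g i) = rsum k f + rsum k g.
Proof. induction k as [|k IH]; simpl; [ring | rewrite IH; ring]. Qed.

Lemma rsum_mult_l k c f : rsum k (fun i => c * f i) = c * rsum k f.
Proof. induction k as [|k IH]; simpl; [ring | rewrite IH; ring]. Qed.

Lemma rsum_mult_r k c f : rsum k (fun i => f i * c) = rsum k f * c.
Proof. induction k as [|k IH]; simpl; [ring | rewrite IH; ring]. Qed.

Lemma rsum_const k c : rsum k (fun _ => c) = INR k * c.
Proof. induction k as [|k IH]; simpl rsum; [simpl; ring | rewrite IH, S_INR; ring]. Qed.

Lemma rsum_0 k : rsum k (fun _ => 0) = 0.
Proof. rewrite rsum_const; ring. Qed.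

Lemma rsum_le k f g : (forall i, (i < k)%nat -> f i <= g i) -> rsum k f <= rsum k g.
Proof.
  induction k as [|k IH]; intros H; simpl; [lra|].
  apply Rplus_le_compat; [apply IH; intros; apply H|apply H]; lia.
Qed.

Lemma rsum_nonneg k f : (forall i, (i < k)%nat -> 0 <= f i) -> 0 <= rsum k f.
Proof. intros H; rewrite <- (rsum_0 k); apply rsum_le; auto. Qed.

Lemma rsum_comm a b f :
  rsum a (fun i => rsum b (fun j => f i j)) = rsum b (fun j => rsum a (fun i => f i j)).
Proof. induction a as [|a IH]; simpl; [rewrite rsum_0 | rewrite IH, rsum_add]; auto. Qed.

Lemma rsum_succ_l k f : rsum (S k) f = f 0%nat + rsum k (fun i => f (S i)).
Proof.
  induction k as [|k IH]; [simpl; ring|].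
  change (rsum (S (S k)) f) with (rsum (S k) f + f (S k)). rewrite IH; simpl; ring.
Qed.

Lemma rsum_pairs k f :
  rsum (S (k + k)) f = f 0%nat + rsum k (fun i => f (S (i + i)) + f (S (S (i + i)))).
Proof.
  induction k as [|k IH]; [simpl; ring|].
  rewrite Nat.add_succ_r; simpl plus.
  change (rsum (S (S (S (k + k)))) f) with (rsum (S (k + k)) f + f (S (k + k)) + f (S (S (k + k)))).
  rewrite IH; simpl rsum; ring.
Qed.

Lemma young_ineq s a b : 0 < s -> 2 * (a * b) <= s * (a * a) + b * b / s.
Proof.
  intros Hs.
  assert (E : s * (a * a) + b * b / s - 2 * (a * b) = (s * a - b) * (s * a - b) / s) by (field; lra).
  assert (0 <= (s * a - b) * (s * a - b) / s).
  { apply Rmult_le_pos; [apply Rle_0_sqr | apply Rlt_le, Rinv_0_lt_compat; lra]. }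
  lra.
Qed.

Lemma rsum_young k s F G H : 0 < s ->
  (forall i, (i < k)%nat -> 2 * F i <= s * G i + H i / s) ->
  2 * rsum k F <= s * rsum k G + rsum k H / s.
Proof.
  intros Hs HFGH.
  unfold Rdiv; rewrite <- rsum_mult_l, <- rsum_mult_l, <- rsum_mult_r, <- rsum_add.
  apply rsum_le; exact HFGH.
Qed.

Lemma cauchy_schwarz k (a b : nat -> R) :
  (rsum k (fun i => a i * b i)) ^ 2 <= rsum k (fun i => a i * a i) * rsum k (fun i => b i * b i).
Proof.
  induction k as [|k IH]; cbn [rsum]; [lra|].
  assert (Lagrange : rsum k (fun i => (a k * b i - b k * a i) ^ 2) =
    a k * a k * rsum k (fun i => b i * b i) + b k * b k * rsum k (fun i => a i * a i)
    - 2 * a k * b k * rsum k (fun i => a i * b i)).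
  { clear IH; generalize (a k) (b k); intros c d.
    induction k as [|m IHm]; cbn [rsum]; [ring | rewrite IHm; ring]. }
  assert (0 <= rsum k (fun i => (a k * b i - b k * a i) ^ 2))
    by (apply rsum_nonneg; intros; apply pow2_ge_0).
  assert (0 <= rsum k (fun i => a i * a i)) by (apply rsum_nonneg; intros; apply Rle_0_sqr).
  assert (0 <= rsum k (fun i => b i * b i)) by (apply rsum_nonneg; intros; apply Rle_0_sqr).
  nra.
Qed.

Definition e (a : nat) : vec := fun i => if Nat.eqb i a then 1 else 0.

Definition dot (n : nat) (x y : vec) : R := rsum n (fun i => x i * y i).

Lemma rsum_mult_e k a f : rsum k (fun i => f i * e a i) = if Nat.ltb a k then f a else 0.
Proof.
  induction k as [|k IH]; [reflexivity|]. simpl rsum; rewrite IH; unfold e.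
  destruct (Nat.ltb_spec a k), (Nat.ltb_spec a (S k)), (Nat.eqb_spec k a); subst; try lia; ring.
Qed.

Lemma dot_e_l n a x : (a < n)%nat -> dot n (e a) x = x a.
Proof.
  intros Ha; unfold dot.
  rewrite (rsum_ext _ _ (fun i => x i * e a i)) by (intros; ring).
  rewrite rsum_mult_e; apply Nat.ltb_lt in Ha; rewrite Ha; reflexivity.
Qed.

Lemma dot_comb_e_l n a b c1 c2 x : (a < n)%nat -> (b < n)%nat ->
  dot n (fun i => c1 * e a i + c2 * e b i) x = c1 * x a + c2 * x b.
Proof.
  intros Ha Hb; unfold dot.
  rewrite (rsum_ext _ _ (fun i => c1 * (x i * e a i) + c2 * (x i * e b i))) by (intros; ring).
  rewrite rsum_add, !rsum_mult_l, !rsum_mult_e.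
  apply Nat.ltb_lt in Ha, Hb; rewrite Ha, Hb; reflexivity.
Qed.

Lemma frob_ext_l n A A' B : teq n A A' -> frob n A B = frob n A' B.
Proof.
  intros H; unfold frob.
  do 3 (apply rsum_ext_lt; intros ? ?). rewrite H; auto.
Qed.

Lemma frob_ext_r n A B B' : teq n B B' -> frob n A B = frob n A B'.
Proof.
  intros H; unfold frob.
  do 3 (apply rsum_ext_lt; intros ? ?). rewrite H; auto.
Qed.

Lemma frob_comm n A B : frob n A B = frob n B A.
Proof. unfold frob; do 3 (apply rsum_ext; intro); ring. Qed.

Lemma frob_add_l n A B C : frob n (tadd A B) C = frob n A C + frob n B C.
Proof.
  unfold frob, tadd; rewrite <- rsum_add.
  apply rsum_ext; intro; rewrite <- rsum_add.
  apply rsum_ext; intro; rewrite <- rsum_add.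
  apply rsum_ext; intro; ring.
Qed.

Lemma frob_scale_l n c A B : frob n (tscale c A) B = c * frob n A B.
Proof.
  unfold frob, tscale; rewrite <- rsum_mult_l.
  apply rsum_ext; intro; rewrite <- rsum_mult_l.
  apply rsum_ext; intro; rewrite <- rsum_mult_l.
  apply rsum_ext; intro; ring.
Qed.

Lemma frob_sub_l n A B C : frob n (tsub A B) C = frob n A C - frob n B C.
Proof.
  rewrite (frob_ext_l n _ (tadd A (tscale (-1) B))) by (intros ? ? ? _ _ _; unfold tsub, tadd, tscale; ring).
  rewrite frob_add_l, frob_scale_l; ring.
Qed.

Lemma frob_add_r n A B C : frob n A (tadd B C) = frob n A B + frob n A C.
Proof. rewrite !(frob_comm n A); apply frob_add_l. Qed.

Lemma frob_scale_r n c A B : frob n A (tscale c B) = c * frob n A B.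
Proof. rewrite !(frob_comm n A); apply frob_scale_l. Qed.

Lemma frob_0_l n B : frob n (fun _ _ _ => 0) B = 0.
Proof.
  rewrite (frob_ext_l n _ (tscale 0 B)) by (intros ? ? ? _ _ _; unfold tscale; ring).
  rewrite frob_scale_l; ring.
Qed.

Lemma frob_rsum_l n m g B :
  frob n (fun a b c => rsum m (fun j => g j a b c)) B = rsum m (fun j => frob n (g j) B).
Proof.
  induction m as [|m IH]; simpl rsum; [apply frob_0_l|].
  rewrite <- IH, <- frob_add_l; reflexivity.
Qed.

Lemma frob_self_nonneg n A : 0 <= frob n A A.
Proof. unfold frob; do 3 (apply rsum_nonneg; intros ? _); apply Rle_0_sqr. Qed.

Lemma frob_young n s A B : 0 < s -> 2 * frob n A B <= s * frob n A A + frob n B B / s.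
Proof.
  intros Hs; unfold frob.
  do 3 (apply rsum_young; [exact Hs | intros ? _]). apply young_ineq; exact Hs.
Qed.

Lemma frob_outer3 n a b c x y z :
  frob n (outer3 a b c) (outer3 x y z) = dot n a x * dot n b y * dot n c z.
Proof.
  unfold frob, outer3, dot; rewrite Rmult_assoc, <- rsum_mult_r.
  apply rsum_ext; intro i; rewrite <- rsum_mult_r, <- rsum_mult_l.
  apply rsum_ext; intro j; rewrite <- rsum_mult_l, <- rsum_mult_l.
  apply rsum_ext; intro k; ring.
Qed.

Lemma fnorm_sqr n A : fnorm n A * fnorm n A = frob n A A.
Proof. apply sqrt_sqrt, frob_self_nonneg. Qed.

Lemma fnorm_nonneg n A : 0 <= fnorm n A.
Proof. apply sqrt_pos. Qed.

Lemma fnorm_scale n t A : 0 <= t -> fnorm n (tscale t A) = t * fnorm n A.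
Proof.
  intros Ht; unfold fnorm.
  rewrite frob_scale_l, frob_scale_r, <- Rmult_assoc, sqrt_mult_alt, sqrt_square; auto.
  apply Rmult_le_pos; auto.
Qed.

Lemma fnorm_neq0 n A B : frob n A B <> 0 -> fnorm n A <> 0.
Proof.
  intros HAB H0.
  assert (HAA : frob n A A = 0) by (rewrite <- fnorm_sqr, H0; ring).
  set (a := frob n A B) in *; set (b := frob n B B).
  assert (Hb : 0 <= b) by apply frob_self_nonneg.
  (* Young's inequality for [A] and [a B] gives [2 a^2 <= a^2 b / (b + 1)]. *)
  pose proof (frob_young n (b + 1) A (tscale a B) ltac:(lra)) as HY.
  rewrite frob_scale_r, frob_scale_l, frob_scale_r, HAA in HY. fold a b in HY.
  assert (Ha2 : 0 < a * a) by (apply Rsqr_pos_lt; exact HAB).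
  assert (a * (a * b) / (b + 1) <= a * a).
  { apply Rmult_le_reg_r with (b + 1); [lra|].
    replace (a * (a * b) / (b + 1) * (b + 1)) with (a * a * b) by (field; lra). nra. }
  lra.
Qed.

Lemma specnorm_bounds n A lo hi : spec_vals n A lo ->
  (forall v, spec_vals n A v -> v <= hi) -> lo <= specnorm n A <= hi.
Proof.
  intros Hlo Hhi; unfold specnorm.
  assert (Hlub : exists m, is_lub (spec_vals n A) m).
  { destruct (completeness (spec_vals n A)) as [m Hm]; [exists hi; exact Hhi | exists lo; exact Hlo|].
    exists m; exact Hm. }
  destruct (epsilon_spec (inhabits 0) (is_lub (spec_vals n A)) Hlub) as [Hub Hleast].
  split; [apply Hub; exact Hlo | apply Hleast; exact Hhi].
Qed.

Lemma tconv_const n A : tconv n (fun _ => A) A.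
Proof.
  intros eps Heps; exists 0%nat; intros k _; unfold fnorm.
  rewrite (frob_ext_l n _ (fun _ _ _ => 0)) by (intros ? ? ? _ _ _; unfold tsub; ring).
  rewrite frob_0_l, sqrt_0; exact Heps.
Qed.

Lemma tsym_outer3 n v : tsym n (outer3 v v v).
Proof. unfold tsym, outer3; intros; split; ring. Qed.

Lemma tsym_tscale n c A : tsym n A -> tsym n (tscale c A).
Proof.
  intros HA i j k Hi Hj Hk; unfold tscale.
  destruct (HA i j k Hi Hj Hk) as [E1 E2]; split; [rewrite E1 | rewrite E2]; reflexivity.
Qed.

Section RankOneClarkeLimit.

Variables (n : nat) (p : tensor) (v : vec).
Hypothesis p_sym : tsym n p.
Hypothesis v_unit : vnorm2 n v = 1.
Hypothesis v_max : forall x y z, vnorm2 n x = 1 -> vnorm2 n y = 1 -> vnorm2 n z = 1 ->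
  frob n p (outer3 x y z) <= frob n p (outer3 v v v).

Let w := outer3 v v v.

Definition interp (t : R) : tensor := tadd (tscale (1 - t) p) (tscale t w).

Lemma frob_w_w : frob n w w = 1.
Proof. unfold w; rewrite frob_outer3; unfold dot; fold (vnorm2 n v); rewrite v_unit; ring. Qed.

Lemma frob_interp_add_l t h B :
  frob n (tadd (interp t) h) B = (1 - t) * frob n p B + t * frob n w B + frob n h B.
Proof. unfold interp; rewrite !frob_add_l, !frob_scale_l; reflexivity. Qed.

(* The unit triple [x, y, z] pays [t (1 - <w, x⊗y⊗z>) = t |x⊗y⊗z - w|^2 / 2] relative to
   [v, v, v], which absorbs the [h]-term up to [|h|^2 / (2 t)]. *)
Lemma specnorm_interp_add t h : 0 < t <= 1 ->
  (1 - t) * frob n p w + t + frob n h w <= specnorm n (tadd (interp t) h) <=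
  (1 - t) * frob n p w + t + frob n h w + frob n h h / (2 * t).
Proof.
  intros Ht; apply specnorm_bounds.
  - exists v, v, v; do 3 (split; [exact v_unit|]).
    rewrite frob_interp_add_l; fold w; rewrite frob_w_w; ring.
  - intros u [x [y [z [Hx [Hy [Hz ->]]]]]].
    rewrite frob_interp_add_l.
    set (D := tadd (outer3 x y z) (tscale (-1) w)).
    assert (Hh : frob n h (outer3 x y z) = frob n h w + frob n h D).
    { unfold D; rewrite frob_add_r, frob_scale_r; ring. }
    assert (HD : frob n D D = 2 - 2 * frob n w (outer3 x y z)).
    { unfold D; rewrite !frob_add_l, !frob_add_r, !frob_scale_l, !frob_scale_r, frob_w_w.
      rewrite (frob_comm n (outer3 x y z) w), frob_outer3; unfold dot.
      fold (vnorm2 n x) (vnorm2 n y) (vnorm2 n z); rewrite Hx, Hy, Hz; ring. }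
    pose proof (frob_young n (/ t) h D ltac:(apply Rinv_0_lt_compat; lra)) as HY.
    replace (frob n D D / / t) with (t * frob n D D) in HY by (field; lra).
    replace (frob n h h / (2 * t)) with (/ t * frob n h h / 2) by (field; lra).
    assert ((1 - t) * frob n p (outer3 x y z) <= (1 - t) * frob n p w)
      by (apply Rmult_le_compat_l; [lra | apply v_max; assumption]).
    rewrite HD in HY; lra.
Qed.

Lemma specnorm_has_grad_interp t : 0 < t <= 1 -> has_grad n (specnorm n) (interp t) w.
Proof.
  intros Ht; split; [apply tsym_outer3|].
  intros eps Heps; exists (2 * t * eps); split; [nra|].
  intros h _ Hh.
  pose proof (specnorm_interp_add t h Ht) as Bh.
  pose proof (specnorm_interp_add t (fun _ _ _ => 0) Ht) as B0.
  rewrite !frob_0_l in B0.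
  replace (tadd (interp t) (fun _ _ _ => 0)) with (interp t) in B0
    by (unfold tadd; do 3 (apply functional_extensionality; intro); ring).
  assert (Hq : frob n h h / (2 * t) <= eps * fnorm n h).
  { rewrite <- fnorm_sqr. pose proof (fnorm_nonneg n h).
    apply Rmult_le_reg_r with (2 * t); [lra|].
    replace (fnorm n h * fnorm n h / (2 * t) * (2 * t)) with (fnorm n h * fnorm n h) by (field; lra).
    nra. }
  rewrite (frob_comm n w h), Rabs_pos_eq; lra.
Qed.

Lemma tconv_interp : tconv n (fun k => interp (/ (INR k + 2))) p.
Proof.
  intros eps Heps.
  set (K := fnorm n (tsub w p)).
  assert (HK : 0 <= K) by apply fnorm_nonneg.
  assert (Hdist : forall t, 0 <= t -> fnorm n (tsub (interp t) p) = t * K).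
  { intros t Ht; unfold K; rewrite <- fnorm_scale by exact Ht; unfold fnorm.
    assert (E : teq n (tsub (interp t) p) (tscale t (tsub w p)))
      by (intros ? ? ? _ _ _; unfold tsub, interp, tadd, tscale; ring).
    rewrite (frob_ext_l _ _ _ _ E), (frob_ext_r _ _ _ _ E); reflexivity. }
  destruct (archimed_cor1 (eps / (K + 1))) as [N [HN1 HN2]]; [apply Rdiv_lt_0_compat; lra|].
  exists N; intros k Hk.
  assert (HNk : INR N <= INR k) by (apply le_INR; lia).
  assert (HN0 : 0 < INR N) by (apply lt_0_INR; lia).
  assert (Ht : / (INR k + 2) <= / INR N) by (apply Rinv_le_contravar; lra).
  rewrite Hdist by (apply Rlt_le, Rinv_0_lt_compat; lra).
  assert (/ (INR k + 2) * K <= eps / (K + 1) * K) by (apply Rmult_le_compat_r; lra).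
  assert (eps / (K + 1) * K < eps).
  { apply Rmult_lt_reg_r with (K + 1); [lra|].
    replace (eps / (K + 1) * K * (K + 1)) with (eps * K) by (field; lra). nra. }
  lra.
Qed.

Lemma rank_one_clarke_limit : clarke_limits n (specnorm n) p w.
Proof.
  exists (fun k => interp (/ (INR k + 2))), (fun _ => w).
  assert (Ht : forall k, 0 < / (INR k + 2) <= 1).
  { intros k; pose proof (pos_INR k); split; [apply Rinv_0_lt_compat; lra|].
    rewrite <- Rinv_1; apply Rinv_le_contravar; lra. }
  split; [|split; [|split]].
  - intros k; unfold interp, w, tsym, tadd, tscale, outer3; intros i j l Hi Hj Hl.
    destruct (p_sym i j l Hi Hj Hl) as [E1 E2]; split; [rewrite E1 | rewrite E2]; ring.
  - intros k; apply specnorm_has_grad_interp, Ht.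
  - apply tconv_interp.
  - apply tconv_const.
Qed.

End RankOneClarkeLimit.

Definition vadd (x y : vec) : vec := fun i => x i + y i.

Section CubicForm.

Variables (n : nat) (D : tensor).

Lemma frob_outer3_addl x x' y z :
  frob n D (outer3 (vadd x x') y z) = frob n D (outer3 x y z) + frob n D (outer3 x' y z).
Proof. rewrite <- frob_add_r; apply frob_ext_r; intros ? ? ? _ _ _; unfold tadd, outer3, vadd; ring. Qed.

Lemma frob_outer3_addm x y y' z :
  frob n D (outer3 x (vadd y y') z) = frob n D (outer3 x y z) + frob n D (outer3 x y' z).
Proof. rewrite <- frob_add_r; apply frob_ext_r; intros ? ? ? _ _ _; unfold tadd, outer3, vadd; ring. Qed.

Lemma frob_outer3_addr x y z z' :
  frob n D (outer3 x y (vadd z z')) = frob n D (outer3 x y z) + frob n D (outer3 x y z').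
Proof. rewrite <- frob_add_r; apply frob_ext_r; intros ? ? ? _ _ _; unfold tadd, outer3, vadd; ring. Qed.

Lemma frob_outer3_e a b c : (a < n)%nat -> (b < n)%nat -> (c < n)%nat ->
  frob n D (outer3 (e a) (e b) (e c)) = D a b c.
Proof.
  intros Ha Hb Hc; unfold frob, outer3.
  rewrite (rsum_ext _ _ (fun i => rsum n (fun j => rsum n (fun k => D i j k * e b j * e c k)) * e a i))
    by (intro i; rewrite <- rsum_mult_r; apply rsum_ext; intro j;
        rewrite <- rsum_mult_r; apply rsum_ext; intro k; ring).
  rewrite rsum_mult_e; apply Nat.ltb_lt in Ha; rewrite Ha.
  rewrite (rsum_ext _ _ (fun j => rsum n (fun k => D a j k * e c k) * e b j))
    by (intro j; rewrite <- rsum_mult_r; apply rsum_ext; intro k; ring).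
  rewrite rsum_mult_e; apply Nat.ltb_lt in Hb; rewrite Hb.
  rewrite rsum_mult_e; apply Nat.ltb_lt in Hc; rewrite Hc; reflexivity.
Qed.

Hypothesis D_sym : tsym n D.

Lemma frob_outer3_swap12 x y z : frob n D (outer3 x y z) = frob n D (outer3 y x z).
Proof.
  unfold frob, outer3.
  rewrite (rsum_comm n n (fun i j => rsum n (fun k => D i j k * (y i * x j * z k)))).
  apply rsum_ext_lt; intros i Hi; apply rsum_ext_lt; intros j Hj; apply rsum_ext_lt; intros k Hk.
  rewrite (proj1 (D_sym i j k Hi Hj Hk)); ring.
Qed.

Lemma frob_outer3_swap23 x y z : frob n D (outer3 x y z) = frob n D (outer3 x z y).
Proof.
  unfold frob, outer3.
  apply rsum_ext_lt; intros i Hi.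
  rewrite (rsum_comm n n (fun j k => D i j k * (x i * z j * y k))).
  apply rsum_ext_lt; intros j Hj; apply rsum_ext_lt; intros k Hk.
  rewrite (proj2 (D_sym i k j Hi Hk Hj)); ring.
Qed.

(* Polarization: [6 D(x,y,z)] is an alternating sum of [D(u,u,u)] over [u = x+y+z, x+y, x+z, y+z, x, y, z]. *)
Lemma cubic_form_eq0_trilinear : (forall x, frob n D (outer3 x x x) = 0) ->
  forall x y z, frob n D (outer3 x y z) = 0.
Proof.
  intros HQ x y z.
  pose proof (HQ (vadd x (vadd y z))) as Hxyz. pose proof (HQ (vadd x y)) as Hxy.
  pose proof (HQ (vadd x z)) as Hxz. pose proof (HQ (vadd y z)) as Hyz.
  pose proof (HQ x). pose proof (HQ y). pose proof (HQ z).
  rewrite !frob_outer3_addl, !frob_outer3_addm, !frob_outer3_addr in Hxyz, Hxy, Hxz, Hyz.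
  rewrite !frob_outer3_addl, !frob_outer3_addm, !frob_outer3_addr in Hxyz.
  pose proof (frob_outer3_swap23 x x y). pose proof (frob_outer3_swap12 x y x).
  pose proof (frob_outer3_swap23 x x z). pose proof (frob_outer3_swap12 x z x).
  pose proof (frob_outer3_swap23 y y x). pose proof (frob_outer3_swap12 y x y).
  pose proof (frob_outer3_swap23 y y z). pose proof (frob_outer3_swap12 y z y).
  pose proof (frob_outer3_swap23 z z x). pose proof (frob_outer3_swap12 z x z).
  pose proof (frob_outer3_swap23 z z y). pose proof (frob_outer3_swap12 z y z).
  pose proof (frob_outer3_swap23 x y z). pose proof (frob_outer3_swap12 x y z).
  pose proof (frob_outer3_swap23 y x z). pose proof (frob_outer3_swap12 x z y).
  pose proof (frob_outer3_swap23 z x y).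
  lra.
Qed.

End CubicForm.

Lemma teq_of_cubic_form_eq n A B : tsym n A -> tsym n B ->
  (forall x, frob n A (outer3 x x x) = frob n B (outer3 x x x)) -> teq n A B.
Proof.
  intros HA HB HAB a b c Ha Hb Hc.
  assert (Hsym : tsym n (tsub A B)).
  { intros i j k Hi Hj Hk; unfold tsub.
    destruct (HA i j k Hi Hj Hk), (HB i j k Hi Hj Hk); split; congruence. }
  pose proof (cubic_form_eq0_trilinear n (tsub A B) Hsym) as H0.
  assert (HD : tsub A B a b c = 0).
  { rewrite <- (frob_outer3_e n (tsub A B) a b c Ha Hb Hc); apply H0.
    intros x; rewrite frob_sub_l, HAB; ring. }
  unfold tsub in HD; lra.
Qed.

Lemma critical_of_rank_one_decomposition n A lam m (mu : nat -> R) (u : nat -> vec) :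
  tsym n A -> fnorm n A <> 0 ->
  (forall j, (j < m)%nat -> 0 <= mu j /\ vnorm2 n (u j) = 1 /\
     forall x y z, vnorm2 n x = 1 -> vnorm2 n y = 1 -> vnorm2 n z = 1 ->
       frob n A (outer3 x y z) <= frob n A (outer3 (u j) (u j) (u j))) ->
  rsum m mu = 1 ->
  teq n (tscale lam A) (fun a b c => rsum m (fun j => mu j * outer3 (u j) (u j) (u j) a b c)) ->
  critical n A.
Proof.
  intros HA HA0 Hu Hmu Hlam.
  assert (Hinv : 0 < / fnorm n A) by (apply Rinv_0_lt_compat; pose proof (fnorm_nonneg n A); lra).
  split; [exact HA | split; [exact HA0|]].
  exists lam, m, mu, (fun j => outer3 (u j) (u j) (u j)).
  split; [|split; [exact Hmu | exact Hlam]].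
  intros j Hj; destruct (Hu j Hj) as [Hmuj [Hunit Hmax]]; split; [exact Hmuj|].
  apply rank_one_clarke_limit; [| exact Hunit |].
  - intros a b c Ha Hb Hc; unfold tscale; destruct (HA a b c Ha Hb Hc) as [E1 E2].
    split; [rewrite E1 | rewrite E2]; reflexivity.
  - intros x y z Hx Hy Hz; rewrite !frob_scale_l.
    apply Rmult_le_compat_l; [lra | apply Hmax; assumption].
Qed.

(* [ch3_point 0 = e_1]; [ch3_point (2i+1)] and [ch3_point (2i+2)] are [(-e_1 -+ sqrt 3 e_(i+2))/2]
   (indices shifted by one since [x 0] is [x_1]). *)
Definition ch3_point (j : nat) : vec :=
  match j with
  | O => e 0
  | S j' => fun a => - / 2 * e 0 a
                     + (if Nat.odd j' then sqrt 3 else - sqrt 3) / 2 * e (S (Nat.div2 j')) a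
  end.

Definition ch3_weight (n j : nat) : R :=
  match j with O => (INR n + 2) / (9 * INR n - 6) | S _ => 4 / (9 * INR n - 6) end.

Definition ch3_tensor (n : nat) : tensor := fun a b c =>
  rsum (S ((n - 1) + (n - 1)))
    (fun j => ch3_weight n j * outer3 (ch3_point j) (ch3_point j) (ch3_point j) a b c).

Definition tail_dot (n : nat) (x y : vec) : R := rsum (n - 1) (fun i => x (S i) * y (S i)).

Definition ch3_trilinear (n : nat) (x y z : vec) : R :=
  x 0%nat * y 0%nat * z 0%nat
  - x 0%nat * tail_dot n y z - y 0%nat * tail_dot n x z - z 0%nat * tail_dot n x y.

Lemma sqrt3_sqr : sqrt 3 * sqrt 3 = 3.
Proof. apply sqrt_sqrt; lra. Qed.

Lemma ch3_point_minus i :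
  ch3_point (S (i + i)) = fun a => - / 2 * e 0 a + - sqrt 3 / 2 * e (S i) a.
Proof.
  replace (i + i)%nat with (2 * i)%nat by lia; unfold ch3_point; cbv beta iota.
  rewrite Nat.odd_even, Nat.div2_double; reflexivity.
Qed.

Lemma ch3_point_plus i :
  ch3_point (S (S (i + i))) = fun a => - / 2 * e 0 a + sqrt 3 / 2 * e (S i) a.
Proof.
  replace (S (i + i)) with (2 * i + 1)%nat by lia; unfold ch3_point; cbv beta iota.
  rewrite Nat.odd_odd, Nat.div2_odd'; reflexivity.
Qed.

Lemma ch3_point_shape k j : (j < S (k + k))%nat ->
  j = 0%nat \/ exists i s, (i < k)%nat /\ s * s = 3 /\
    ch3_point j = fun a => - / 2 * e 0 a + s / 2 * e (S i) a.
Proof.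
  intros Hj; destruct j as [|j]; [left; reflexivity | right].
  destruct (Nat.Even_or_Odd j) as [[i ->] | [i ->]]; exists i.
  - exists (- sqrt 3); replace (2 * i)%nat with (i + i)%nat by lia.
    rewrite ch3_point_minus; split; [lia | split; [rewrite Rmult_opp_opp; exact sqrt3_sqr | reflexivity]].
  - exists (sqrt 3); replace (2 * i + 1)%nat with (S (i + i)) by lia.
    rewrite ch3_point_plus; split; [lia | split; [exact sqrt3_sqr | reflexivity]].
Qed.

Lemma ch3_point_unit n j : (j < S ((n - 1) + (n - 1)))%nat -> (2 <= n)%nat ->
  vnorm2 n (ch3_point j) = 1.
Proof.
  intros Hj Hn; change (dot n (ch3_point j) (ch3_point j) = 1).
  destruct (ch3_point_shape (n - 1) j Hj) as [-> | [i [s [Hi [Hs ->]]]]].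
  - cbn [ch3_point]; rewrite dot_e_l by lia; reflexivity.
  - rewrite dot_comb_e_l by lia; unfold e; simpl; rewrite Nat.eqb_refl; nra.
Qed.

Lemma Ch3_ch3_point n j : (j < S ((n - 1) + (n - 1)))%nat -> Ch3 n (ch3_point j) = 1.
Proof.
  intros Hj; unfold Ch3.
  destruct (ch3_point_shape (n - 1) j Hj) as [-> | [i [s [Hi [Hs ->]]]]].
  - cbn [ch3_point]; rewrite (rsum_ext _ _ (fun _ => 0)), rsum_0 by (intros; unfold e; simpl; ring).
    unfold e; simpl; ring.
  - rewrite (rsum_ext _ _ (fun k => s * s / 4 * (1 * e i k)))
      by (intros k; unfold e; simpl; destruct (Nat.eqb k i); field).
    rewrite rsum_mult_l, rsum_mult_e; apply Nat.ltb_lt in Hi; rewrite Hi, Hs.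
    unfold e; simpl; field.
Qed.

Lemma ch3_weight_nonneg n j : (2 <= n)%nat -> 0 <= ch3_weight n j.
Proof.
  intros Hn; assert (2 <= INR n) by (apply (le_INR 2); exact Hn).
  destruct j; apply Rlt_le, Rdiv_lt_0_compat; lra.
Qed.

Lemma rsum_ch3_weight n : (2 <= n)%nat -> rsum (S ((n - 1) + (n - 1))) (ch3_weight n) = 1.
Proof.
  intros Hn; assert (2 <= INR n) by (apply (le_INR 2); exact Hn).
  rewrite rsum_pairs; cbn [ch3_weight]; rewrite rsum_const.
  rewrite minus_INR by lia; simpl INR; field; lra.
Qed.

Lemma tsym_ch3_tensor n : tsym n (ch3_tensor n).
Proof. intros a b c _ _ _; unfold ch3_tensor, outer3; split; apply rsum_ext; intro; ring. Qed.

Lemma ch3_pair_product x0 y0 z0 xi yi zi :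
  (- / 2 * x0 + - sqrt 3 / 2 * xi) * (- / 2 * y0 + - sqrt 3 / 2 * yi) * (- / 2 * z0 + - sqrt 3 / 2 * zi)
  + (- / 2 * x0 + sqrt 3 / 2 * xi) * (- / 2 * y0 + sqrt 3 / 2 * yi) * (- / 2 * z0 + sqrt 3 / 2 * zi)
  = - / 4 * (x0 * y0 * z0) - 3 / 4 * (x0 * (yi * zi) + y0 * (xi * zi) + z0 * (xi * yi)).
Proof.
  transitivity (- / 4 * (x0 * y0 * z0)
                - sqrt 3 * sqrt 3 / 4 * (x0 * (yi * zi) + y0 * (xi * zi) + z0 * (xi * yi)));
    [field | rewrite sqrt3_sqr; reflexivity].
Qed.

Lemma frob_ch3_tensor_outer3 n x y z : (2 <= n)%nat ->
  frob n (ch3_tensor n) (outer3 x y z) = ch3_trilinear n x y z / (3 * INR n - 2).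
Proof.
  intros Hn; assert (2 <= INR n) by (apply (le_INR 2); exact Hn).
  set (K := 4 / (9 * INR n - 6)).
  unfold ch3_tensor; rewrite (frob_rsum_l n _
    (fun j => tscale (ch3_weight n j) (outer3 (ch3_point j) (ch3_point j) (ch3_point j)))).
  rewrite (rsum_ext _ _ (fun j => ch3_weight n j *
    (dot n (ch3_point j) x * dot n (ch3_point j) y * dot n (ch3_point j) z)))
    by (intro; rewrite frob_scale_l, frob_outer3; reflexivity).
  rewrite rsum_pairs, (rsum_ext_lt (n - 1) _ (fun i =>
      - K / 4 * (x 0%nat * y 0%nat * z 0%nat) + - 3 * K / 4 * x 0%nat * (y (S i) * z (S i))
      + - 3 * K / 4 * y 0%nat * (x (S i) * z (S i)) + - 3 * K / 4 * z 0%nat * (x (S i) * y (S i)))).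
  2:{ intros i Hi; rewrite ch3_point_minus, ch3_point_plus, !dot_comb_e_l by lia.
      cbn [ch3_weight]; fold K.
      rewrite <- Rmult_plus_distr_l, ch3_pair_product; field. }
  rewrite !rsum_add, !rsum_mult_l, rsum_const; cbn [ch3_weight ch3_point].
  rewrite !dot_e_l by lia.
  unfold ch3_trilinear, tail_dot, K; rewrite minus_INR by lia; simpl INR.
  field; lra.
Qed.

Lemma ch3_trilinear_diag n x : ch3_trilinear n x x x = Ch3 n x.
Proof.
  unfold ch3_trilinear, Ch3, tail_dot.
  rewrite (rsum_ext _ (fun i => x (S i) * x (S i)) (fun i => x (S i) ^ 2)) by (intros; ring).
  ring.
Qed.

Lemma vnorm2_head_tail n x : (1 <= n)%nat -> vnorm2 n x = x 0%nat * x 0%nat + tail_dot n x x.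
Proof. intros Hn; unfold vnorm2, tail_dot; replace n with (S (n - 1)) at 1 by lia; apply rsum_succ_l. Qed.

(* With [a = y_1 z_1 - <y', z'>] and [b = y_1 z' + z_1 y'], the form is [x_1 a - <x', b>], which is
   at most [(|x|^2 + a^2 + |b|^2) / 2]; and [a^2 + |b|^2 <= |y|^2 |z|^2] by Cauchy-Schwarz for [y', z']. *)
Lemma ch3_trilinear_le_1 n x y z : (1 <= n)%nat ->
  vnorm2 n x = 1 -> vnorm2 n y = 1 -> vnorm2 n z = 1 -> ch3_trilinear n x y z <= 1.
Proof.
  intros Hn Hx Hy Hz.
  rewrite vnorm2_head_tail in Hx, Hy, Hz by exact Hn; unfold ch3_trilinear.
  set (x0 := x 0%nat) in *; set (y0 := y 0%nat) in *; set (z0 := z 0%nat) in *.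
  assert (Hb : rsum (n - 1) (fun i => (x (S i) + (y0 * z (S i) + z0 * y (S i))) ^ 2) =
    tail_dot n x x + 2 * y0 * tail_dot n x z + 2 * z0 * tail_dot n x y
    + y0 * y0 * tail_dot n z z + z0 * z0 * tail_dot n y y + 2 * y0 * z0 * tail_dot n y z).
  { unfold tail_dot; induction (n - 1)%nat as [|k IH]; cbn [rsum]; [ring | rewrite IH; ring]. }
  assert (0 <= rsum (n - 1) (fun i => (x (S i) + (y0 * z (S i) + z0 * y (S i))) ^ 2))
    by (apply rsum_nonneg; intros; apply pow2_ge_0).
  pose proof (cauchy_schwarz (n - 1) (fun i => y (S i)) (fun i => z (S i))) as HCS.
  cbv beta in HCS; fold (tail_dot n y z) (tail_dot n y y) (tail_dot n z z) in HCS.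
  assert (0 <= (x0 - (y0 * z0 - tail_dot n y z)) ^ 2) by apply pow2_ge_0.
  assert ((y0 * y0 + tail_dot n y y) * (z0 * z0 + tail_dot n z z) = 1) by (rewrite Hy, Hz; ring).
  nra.
Qed.

Lemma ch3_identity n x : (2 <= n)%nat ->
  / (3 * INR n - 2) * Ch3 n x =
  (INR n + 2) / (9 * INR n - 6) * x 0%nat ^ 3 +
  4 / (9 * INR n - 6) *
    rsum (n - 1) (fun i =>
      - ((x 0%nat + sqrt 3 * x (S i)) / 2) ^ 3 + ((- x 0%nat + sqrt 3 * x (S i)) / 2) ^ 3).
Proof.
  intros Hn; assert (2 <= INR n) by (apply (le_INR 2); exact Hn).
  rewrite (rsum_ext _ _ (fun i => - / 4 * x 0%nat ^ 3 + - 9 / 4 * x 0%nat * x (S i) ^ 2)).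
  2:{ intros i; transitivity (- / 4 * x 0%nat ^ 3 + - 3 * (sqrt 3 * sqrt 3) / 4 * x 0%nat * x (S i) ^ 2);
      [field | rewrite sqrt3_sqr; field]. }
  rewrite rsum_add, rsum_const, rsum_mult_l; unfold Ch3.
  rewrite minus_INR by lia; simpl INR; field; lra.
Qed.

Theorem corollary1p13 (n : nat) (Hn : (2 <= n)%nat) :
  (forall x : vec,
     / (3 * INR n - 2) * Ch3 n x =
     (INR n + 2) / (9 * INR n - 6) * x 0%nat ^ 3 +
     4 / (9 * INR n - 6) *
       rsum (n - 1) (fun i =>
         - ((x 0%nat + sqrt 3 * x (S i)) / 2) ^ 3 +
           ((- x 0%nat + sqrt 3 * x (S i)) / 2) ^ 3)) /\
  (forall A : tensor, tsym n A ->
     (forall x : vec, frob n A (outer3 x x x) = Ch3 n x) ->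
     critical n A).
Proof.
  split; [intros x; apply ch3_identity, Hn|].
  intros A HA HAx.
  assert (HI : 2 <= INR n) by (apply (le_INR 2); exact Hn).
  assert (HAC : teq n A (tscale (3 * INR n - 2) (ch3_tensor n))).
  { apply teq_of_cubic_form_eq; [exact HA | apply tsym_tscale, tsym_ch3_tensor |].
    intros x; rewrite HAx, frob_scale_l, frob_ch3_tensor_outer3, ch3_trilinear_diag by exact Hn.
    field; lra. }
  assert (HAt : forall x y z, frob n A (outer3 x y z) = ch3_trilinear n x y z).
  { intros x y z; rewrite (frob_ext_l _ _ _ _ HAC), frob_scale_l, frob_ch3_tensor_outer3 by exact Hn.
    field; lra. }
  apply (critical_of_rank_one_decomposition n A (/ (3 * INR n - 2)) (S ((n - 1) + (n - 1)))
           (ch3_weight n) ch3_point HA).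
  - apply (fnorm_neq0 n A (outer3 (ch3_point 0) (ch3_point 0) (ch3_point 0))).
    rewrite HAx, Ch3_ch3_point by lia; lra.
  - intros j Hj; split; [apply ch3_weight_nonneg, Hn | split; [apply ch3_point_unit; assumption |]].
    intros x y z Hx Hy Hz; rewrite !HAt, ch3_trilinear_diag, Ch3_ch3_point by exact Hj.
    apply ch3_trilinear_le_1; [lia | assumption..].
  - apply rsum_ch3_weight, Hn.
  - intros a b c Ha Hb Hc; unfold tscale; rewrite HAC by assumption.
    unfold tscale, ch3_tensor; field; lra.
Qed.
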